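(* Let $M$ be a matroid on ground set $S$, let $g\geq 3$ be an integer, and let $\mathcal{C}$ be a family of circuits of $M$ such that for every $1\leq i\leq g-1$ and every $X\subseteq S$ with $|X|=i$ we have $|\{C\in\mathcal{C}:\ |X\cap C|\geq 2\}|\leq i-1$. Then in any rainbow circuit-free coloring of $M$ in which each color is used at most $g-1$ times, the number $q$ of distinct colors satisfies $|\mathcal{C}|/(g-2)\leq q\leq |S|-|\mathcal{C}|$.
   Context: A coloring of $S$ is a partition of $S$ into nonempty color classes; it is rainbow circuit-free if no circuit of $M$ has all its elements of pairwise different colors. *)

From mathcomp Require Import all_boot all_order all_algebra.
Set Implicit Arguments. Unset Strict Implicit. Unset Printing Implicit Defensive.

Definition matroid_circuits (T : finType) (circ : {set {set T}}) : Prop :=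
  [/\ set0 \notin circ,
      (forall C1 C2, C1 \in circ -> C2 \in circ -> C1 \subset C2 -> C1 = C2) &
      (forall C1 C2 e, C1 \in circ -> C2 \in circ -> C1 != C2 ->
         e \in C1 :&: C2 -> exists2 C3, C3 \in circ & C3 \subset (C1 :|: C2) :\ e)].

(* A coloring of the ground set: a partition into nonempty color classes
   (mathcomp's [partition] requires set0 \notin P). *)
Definition coloring (T : finType) (P : {set {set T}}) : Prop :=
  partition P [set: T].

Definition rainbow (T : finType) (P : {set {set T}}) (A : {set T}) : Prop :=
  forall B, B \in P -> #|A :&: B| <= 1.

Definition rainbow_circuit_free (T : finType) (circ P : {set {set T}}) : Prop :=
  forall C, C \in circ -> ~ rainbow P C.

From mathcomp Require Import all_boot all_order all_algebra.
From mathcomp Require Import lra zify.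
Import Order.TTheory GRing.Theory Num.Theory.

Set Implicit Arguments.
Unset Strict Implicit.
Unset Printing Implicit Defensive.

(* No circuit is rainbow, so every C in fam meets some color
   class B in at least two elements. Applying the hypothesis to X := B
   (|B| <= g - 1), B is charged at most |B| - 1 times, hence
   |fam| <= sum_B (|B| - 1) = |S| - q, and each summand is at most g - 2. *)

Lemma card_le_sum_card_witness (aT bT : finType) (F : {set aT}) (P : {set bT})
    (r : aT -> bT -> bool) :
  (forall a, a \in F -> exists2 b, b \in P & r a b) ->
  #|F| <= \sum_(b in P) #|[set a in F | r a b]|.
Proof.
move=> witness; rewrite -sum1_card.
apply: (@leq_trans (\sum_(a in F) \sum_(b in P) r a b)).
  by apply: leq_sum => a aF; have [b bP rab] := witness a aF; rewrite (bigD1 b) //= rab.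
rewrite exchange_big; apply: leq_sum => b _.
rewrite -sum1_card big_mkcond [leqRHS]big_mkcond /=.
by apply: leq_sum => a _; rewrite inE; case: (a \in F); case: (r a b).
Qed.

Lemma not_rainbow_block (T : finType) (P : {set {set T}}) (A : {set T}) :
  ~ rainbow P A -> exists2 B, B \in P & 2 <= #|A :&: B|.
Proof.
move=> notA; apply/exists_inP; apply: contra_notT notA => /exists_inPn noB B BP.
by rewrite leqNgt noB.
Qed.

Section PartitionBlocks.

Variables (T : finType) (P : {set {set T}}) (D : {set T}).
Hypothesis partP : partition P D.

Lemma partition_card_gt0 B : B \in P -> 0 < #|B|.
Proof. by move=> BP; rewrite card_gt0 (partition_neq0 partP BP). Qed.

Lemma sum_card_pred_partition : \sum_(B in P) (#|B| - 1) + #|P| = #|D|.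
Proof.
rewrite -sum1_card -big_split /= (card_partition partP).
by apply: eq_bigr => B BP; rewrite subnK // partition_card_gt0.
Qed.

End PartitionBlocks.

Lemma card_fam_le_sum_card_pred (T : finType) (circ fam P : {set {set T}})
    (g : nat) :
  fam \subset circ ->
  (forall i : nat, 1 <= i <= g - 1 -> forall X : {set T}, #|X| = i ->
     #|[set C in fam | 2 <= #|X :&: C|]| <= i - 1) ->
  coloring P -> rainbow_circuit_free circ P ->
  (forall B, B \in P -> #|B| <= g - 1) ->
  #|fam| <= \sum_(B in P) (#|B| - 1).
Proof.
move=> famS sparse colP rcf smallP.
have blockP C : C \in fam -> exists2 B, B \in P & 2 <= #|B :&: C|.
  move=> Cfam; have [B BP twoCB] := not_rainbow_block (rcf C (subsetP famS C Cfam)).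
  by exists B; rewrite // setIC.
apply: leq_trans (card_le_sum_card_witness blockP) _.
apply: leq_sum => B BP; apply: sparse => //.
by rewrite (partition_card_gt0 colP BP) smallP.
Qed.

Theorem theorem7 (T : finType) (circ : {set {set T}}) (g : nat)
  (fam : {set {set T}}) :
  matroid_circuits circ ->
  3 <= g ->
  fam \subset circ ->
  (forall i : nat, 1 <= i <= g - 1 -> forall X : {set T}, #|X| = i ->
     #|[set C in fam | 2 <= #|X :&: C|]| <= i - 1) ->
  forall P : {set {set T}},
    coloring P -> rainbow_circuit_free circ P ->
    (forall B, B \in P -> #|B| <= g - 1) ->
    ((#|fam|%:R / (g - 2)%:R <= #|P|%:R :> rat)%R /\
     (#|P|%:R <= #|T|%:R - #|fam|%:R :> rat)%R).
Proof.
move=> _ g3 famS sparse P colP rcf smallP.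
have famP := card_fam_le_sum_card_pred famS sparse colP rcf smallP.
have excessP : \sum_(B in P) (#|B| - 1) <= #|P| * (g - 2).
  rewrite -sum1_card big_distrl /=; apply: leq_sum => B BP.
  by have := smallP B BP; lia.
have sizeP := sum_card_pred_partition colP; rewrite cardsT in sizeP.
split.
  rewrite ler_pdivrMr ?ltr0n; last by lia.
  by rewrite -natrM ler_nat (leq_trans famP excessP).
have : (#|fam| + #|P| <= #|T|)%N by rewrite -sizeP leq_add2r.
by rewrite -(ler_nat rat) natrD; lra.
Qed.
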